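(* Fix a positive $\epsilon\in\Gamma$. Let $d_0\in\mathrm{Der}_0(\mathfrak{L},\mathfrak{V})$ satisfy $d_0(L_\epsilon)=0$. Then $d_0(L_{-\epsilon})=0$.
   Context: Let $\Gamma$ be a nontrivial additive subgroup of $\mathbb{R}$, and let $s\in\mathbb{R}$ with $2s\in\Gamma$. The Lie superalgebra $\mathfrak{L}$ over $\mathbb{C}$ has basis $\{L_p,I_p,G_r,H_r\mid p\in\Gamma,\ r\in s+\Gamma\}$. Here $L_p,I_p$ are even and $G_r,H_r$ are odd. The nonzero super-brackets are $[L_p,L_q]=(p-q)L_{p+q}$, $[L_p,I_q]=(p-q)I_{p+q}$, $[L_p,G_r]=(\tfrac p2-r)G_{p+r}$, $[L_p,H_r]=(\tfrac p2-r)H_{p+r}$, $[G_r,G_t]=I_{r+t}$, $[I_p,G_r]=(p-2r)H_{p+r}$. All other brackets of basis elements vanish, apart from those forced by super-antisymmetry. Grading: - $\mathbb{Z}_s=\Gamma\cup(s+\Gamma)$, an additive subgroup of $\mathbb{R}$. - $\mathfrak{L}=\bigoplus_{p\in\mathbb{Z}_s}\mathfrak{L}_p$, where $\mathfrak{L}_p$ is spanned by those of $L_p,I_p,G_p,H_p$ that exist. - $\mathfrak{V}=\mathfrak{L}\otimes\mathfrak{L}$, with $\mathfrak{V}_r=\bigoplus_{p+q=r}\mathfrak{L}_p\otimes\mathfrak{L}_q$. - $\mathfrak{L}$ acts on $\mathfrak{V}$ by $x\circ(a\otimes b)=[x,a]\otimes b+(-1)^{[x][a]}a\otimes[x,b]$,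 where $[x]$ is parity. Derivations: - A homogeneous derivation of parity $[d]$ is a linear map $d:\mathfrak{L}\to\mathfrak{V}$ shifting parity by $[d]$ and satisfying $d([x,y])=(-1)^{[d][x]}x\circ d(y)-(-1)^{[y]([d]+[x])}y\circ d(x)$. - A derivation is a sum of an even and an odd one. - $\mathrm{Der}_0(\mathfrak{L},\mathfrak{V})$ is the set of derivations $d$ with $d(\mathfrak{L}_p)\subset\mathfrak{V}_{p}$ for all $p\in\mathbb{Z}_s$. *)

From Stdlib Require Import Reals List.
Open Scope R_scope.

Record C := mkC { re : R ; im : R }.
Definition C0 : C := mkC 0 0.
Definition C1 : C := mkC 1 0.
Definition RtoC (x : R) : C := mkC x 0.
Definition Cadd (a b : C) : C := mkC (re a + re b) (im a + im b).
Definition Cmul (a b : C) : C :=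
  mkC (re a * re b - im a * im b) (re a * im b + im a * re b).
Definition Copp (a : C) : C := mkC (- re a) (- im a).
Definition Csign (b : bool) : C := if b then RtoC (-1) else C1.

(** * The basis of the Lie superalgebra L *)
Inductive kind := KL | KI | KG | KH.
Record B := mkB { bk : kind ; bx : R }.

Definition kind_eq_dec (k1 k2 : kind) : {k1 = k2} + {k1 <> k2}.
Proof. decide equality. Defined.
Definition B_eq_dec (a b : B) : {a = b} + {a <> b}.
Proof. decide equality; [apply Req_EM_T | apply kind_eq_dec]. Defined.
Definition BB_eq_dec (a b : B * B) : {a = b} + {a <> b}.
Proof. decide equality; apply B_eq_dec. Defined.

Definition par (b : B) : bool :=
  match bk b with KL | KI => false | KG | KH => true end.

(** [valid Gam s b]: b is one of L_p, I_p (p in Gamma), G_r, H_r (r in s+Gamma) *)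
Definition valid (Gam : R -> Prop) (s : R) (b : B) : Prop :=
  match bk b with KL | KI => Gam (bx b) | KG | KH => Gam (bx b - s) end.

Definition Fs (T : Type) := list (C * T).

Definition coef {T : Type} (dec : forall a b : T, {a = b} + {a <> b})
  (v : Fs T) (t : T) : C :=
  fold_right (fun ct acc => if dec (snd ct) t then Cadd (fst ct) acc else acc) C0 v.

Definition scale {T : Type} (c : C) (v : Fs T) : Fs T :=
  map (fun ct => (Cmul c (fst ct), snd ct)) v.

(** Elements of L and of V = L (x) L *)
Definition VecL := Fs B.
Definition VecV := Fs (B * B).

Definition coefL := coef B_eq_dec.
Definition coefV := coef BB_eq_dec.

Definition tensor (u w : VecL) : VecV :=
  flat_map (fun ca => map (fun cb => (Cmul (fst ca) (fst cb), (snd ca, snd cb))) w) u.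

(** The super-bracket of two basis elements (super-antisymmetry built in) *)
Definition br (x y : B) : VecL :=
  let p := bx x in let q := bx y in
  match bk x, bk y with
  | KL, KL => (RtoC (p - q), mkB KL (p + q)) :: nil
  | KL, KI => (RtoC (p - q), mkB KI (p + q)) :: nil
  | KI, KL => (RtoC (- (q - p)), mkB KI (q + p)) :: nil
  | KL, KG => (RtoC (p / 2 - q), mkB KG (p + q)) :: nil
  | KG, KL => (RtoC (- (q / 2 - p)), mkB KG (q + p)) :: nil
  | KL, KH => (RtoC (p / 2 - q), mkB KH (p + q)) :: nil
  | KH, KL => (RtoC (- (q / 2 - p)), mkB KH (q + p)) :: nil
  | KG, KG => (C1, mkB KI (p + q)) :: nil
  | KI, KG => (RtoC (p - 2 * q), mkB KH (p + q)) :: nil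
  | KG, KI => (RtoC (- (q - 2 * p)), mkB KH (q + p)) :: nil
  | _, _ => nil
  end.

Definition act (x : B) (v : VecV) : VecV :=
  flat_map (fun ct =>
    let a := fst (snd ct) in let b := snd (snd ct) in
    scale (fst ct)
      (tensor (br x a) ((C1, b) :: nil) ++
       scale (Csign (par x && par a)) (tensor ((C1, a) :: nil) (br x b)))) v.

Definition ext (d : B -> VecV) (v : VecL) : VecV :=
  flat_map (fun ct => scale (fst ct) (d (snd ct))) v.

Definition maps_into_V (Gam : R -> Prop) (s : R) (d : B -> VecV) : Prop :=
  forall b, valid Gam s b -> forall u w,
    coefV (d b) (u, w) <> C0 -> valid Gam s u /\ valid Gam s w.

Definition hom_derivation (Gam : R -> Prop) (s : R) (pd : bool) (d : B -> VecV) : Prop :=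
  maps_into_V Gam s d /\
  (forall b, valid Gam s b -> forall u w,
     coefV (d b) (u, w) <> C0 -> xorb (par u) (par w) = xorb (par b) pd) /\
  (forall x y, valid Gam s x -> valid Gam s y -> forall t,
     coefV (ext d (br x y)) t =
     coefV (scale (Csign (pd && par x)) (act x (d y)) ++
            scale (Copp (Csign (par y && xorb pd (par x)))) (act y (d x))) t).

Definition derivation (Gam : R -> Prop) (s : R) (d : B -> VecV) : Prop :=
  exists d0 d1, hom_derivation Gam s false d0 /\ hom_derivation Gam s true d1 /\
    forall b, valid Gam s b -> forall t,
      coefV (d b) t = coefV (d0 b ++ d1 b) t.

(** Der_0(L, V): derivations with d(L_p) in V_p *)
Definition Der0 (Gam : R -> Prop) (s : R) (d : B -> VecV) : Prop :=
  derivation Gam s d /\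
  forall b, valid Gam s b -> forall u w,
    coefV (d b) (u, w) <> C0 -> bx u + bx w = bx b.

Definition nontriv_add_subgroup (Gam : R -> Prop) : Prop :=
  Gam 0 /\ (forall x y, Gam x -> Gam y -> Gam (x + y)) /\
  (forall x, Gam x -> Gam (- x)) /\ (exists g, Gam g /\ g <> 0).

From Pilot Require Import Defs.
From Stdlib Require Import Reals List Lia Lra FinFun Classical.
Open Scope R_scope.

(* Write e_p for the coefficients of d(L_p).  Since L is even, the derivation rule for
   [L_p, L_q] gives (p - q) e_(p+q) = L_p . e_q - L_q . e_p, where L_p shifts a basis tensor
   X_x (x) Y_y with weights beta_X p - x and beta_Y p - y (beta = 1 for L, I and 1/2 for G, H).
   Each d(L_p) is a finite sum, so a chain of nonzero coefficients along an antidiagonal must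
   break, and it can only break where a weight vanishes.  With (p, q) = (0, P) the grading
   gives L_P . d(L_0) = 0 for all P, which forces d(L_0) = 0; then (eps, -eps) gives
   L_eps . d(L_(-eps)) = 0.  So a nonzero coefficient of d(L_(-eps)) climbs to a top position
   whose first factor has index beta_X eps, with nothing above it.  From the top it spreads
   downward forever unless both factors have the same beta; in that case the relation for
   (-eps, 2 eps) and the vanishing above the top kill it. *)

Definition Cpart (b : bool) (z : Defs.C) : R := if b then re z else im z.

Lemma Cpart_C0 b : Cpart b C0 = 0.
Proof. destruct b; reflexivity. Qed.

Lemma Cpart_Cadd b x y : Cpart b (Cadd x y) = Cpart b x + Cpart b y.
Proof. destruct b; reflexivity. Qed.

Lemma Cpart_Cmul_real b c z : im c = 0 -> Cpart b (Cmul c z) = re c * Cpart b z.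
Proof. intro Hc; destruct b; simpl; rewrite Hc; ring. Qed.

Lemma Cparts_eq0 z : (forall b, Cpart b z = 0) -> z = C0.
Proof.
  intro H; destruct z as [x y].
  specialize (H true) as Hx; specialize (H false) as Hy; simpl in Hx, Hy.
  now subst.
Qed.

Lemma Cpart_coef_app {T} dec (v w : Fs T) t b :
  Cpart b (coef dec (v ++ w) t) = Cpart b (coef dec v t) + Cpart b (coef dec w t).
Proof.
  induction v as [|[c x] v IH]; simpl.
  - rewrite Cpart_C0; ring.
  - destruct (dec x t); [rewrite !Cpart_Cadd, IH; ring | exact IH].
Qed.

Lemma coef_scale {T} dec (c : Defs.C) (v : Fs T) t :
  coef dec (scale c v) t = Cmul c (coef dec v t).
Proof.
  induction v as [|[c' x] v IH]; simpl.
  - unfold Cmul, C0; simpl; f_equal; ring.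
  - destruct (dec x t); [rewrite IH | exact IH].
    destruct c, c', (coef dec v t); unfold Cmul, Cadd; simpl; f_equal; ring.
Qed.

Opaque BB_eq_dec.

Lemma Cpart_coefV_cons b ct v t :
  Cpart b (coefV (ct :: v) t) = Cpart b (coefV (ct :: nil) t) + Cpart b (coefV v t).
Proof. exact (Cpart_coef_app BB_eq_dec (ct :: nil) v t b). Qed.

Definition beta (k : kind) : R := match k with KL | KI => 1 | KG | KH => / 2 end.
Definition raise (p : R) (a : B) : B := mkB (bk a) (p + bx a).
Definition lower (p : R) (a : B) : B := mkB (bk a) (bx a - p).

Lemma lower_raise p a : lower p (raise p a) = a.
Proof. destruct a; unfold lower, raise; simpl; f_equal; ring. Qed.

Lemma raise_lower p a : raise p (lower p a) = a.
Proof. destruct a; unfold lower, raise; simpl; f_equal; ring. Qed.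

Lemma br_L_left p a :
  br (mkB KL p) a = (RtoC (beta (bk a) * p - bx a), raise p a) :: nil.
Proof.
  destruct a as [[] q]; unfold br, beta, raise; simpl; unfold RtoC; do 3 f_equal; field.
Qed.

Definition Lact (p : R) (g : B * B -> R) (t : B * B) : R :=
  (beta (bk (fst t)) * p - bx (lower p (fst t))) * g (lower p (fst t), snd t) +
  (beta (bk (snd t)) * p - bx (lower p (snd t))) * g (fst t, lower p (snd t)).

Lemma Lact_ext_add p g g1 g2 t :
  (forall t, g t = g1 t + g2 t) -> Lact p g t = Lact p g1 t + Lact p g2 t.
Proof. intro H; unfold Lact; rewrite !H; ring. Qed.

Lemma Lact_ext_zero p g t : (forall t, g t = 0) -> Lact p g t = 0.
Proof. intro H; unfold Lact; rewrite !H; ring. Qed.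

Lemma raise_fst_iff p a a' u w :
  ((raise p a, a') = (u, w) :> B * B) <-> (a, a') = (lower p u, w).
Proof.
  split; intro E; injection E as E1 E2; subst;
    [rewrite lower_raise | rewrite raise_lower]; reflexivity.
Qed.

Lemma raise_snd_iff p a a' u w :
  ((a, raise p a') = (u, w) :> B * B) <-> (a, a') = (u, lower p w).
Proof.
  split; intro E; injection E as E1 E2; subst;
    [rewrite lower_raise | rewrite raise_lower]; reflexivity.
Qed.

Lemma if_dec_iff {P Q : Prop} {A : Type} (dp : {P} + {~ P}) (dq : {Q} + {~ Q}) (x y : A) :
  (P <-> Q) -> (if dp then x else y) = (if dq then x else y).
Proof. destruct dp, dq; tauto. Qed.

Lemma Cpart_act_L_single b p c a a' u w :
  Cpart b (coefV (act (mkB KL p) ((c, (a, a')) :: nil)) (u, w)) =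
  Lact p (fun t => Cpart b (coefV ((c, (a, a')) :: nil) t)) (u, w).
Proof.
  unfold act; simpl flat_map; rewrite app_nil_r, !br_L_left.
  unfold Lact; simpl.
  rewrite (if_dec_iff _ (BB_eq_dec (a, a') (lower p u, w)) _ _ (raise_fst_iff p a a' u w)),
    (if_dec_iff _ (BB_eq_dec (a, a') (u, lower p w)) _ _ (raise_snd_iff p a a' u w)).
  destruct (BB_eq_dec (a, a') (lower p u, w)) as [E|],
    (BB_eq_dec (a, a') (u, lower p w)) as [E'|].
  - (* only possible for p = 0 *)
    rewrite E in E'; injection E as -> ->; injection E' as Eu _.
    apply (f_equal bx) in Eu; simpl in Eu.
    replace p with 0 by lra; destruct b; simpl; ring.
  - injection E as -> ->; destruct b; simpl; ring.
  - injection E' as -> ->; destruct b; simpl; ring.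
  - destruct b; simpl; ring.
Qed.

Lemma act_cons x ct v : act x (ct :: v) = act x (ct :: nil) ++ act x v.
Proof. unfold act; cbn [flat_map]; rewrite app_nil_r; reflexivity. Qed.

Lemma Cpart_act_L b p v t :
  Cpart b (coefV (act (mkB KL p) v) t) = Lact p (fun t => Cpart b (coefV v t)) t.
Proof.
  destruct t as [u w].
  induction v as [|[c [a a']] v IH].
  - unfold Lact; simpl; rewrite Cpart_C0; ring.
  - rewrite act_cons; unfold coefV at 1; rewrite Cpart_coef_app; fold coefV.
    rewrite Cpart_act_L_single, IH.
    symmetry; apply Lact_ext_add; intro t; apply Cpart_coefV_cons.
Qed.

Definition Lcoef (b : bool) (d : B -> VecV) (p : R) (t : B * B) : R :=
  Cpart b (coefV (d (mkB KL p)) t).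

Lemma Cpart_ext_br_LL b d p q t :
  Cpart b (coefV (ext d (br (mkB KL p) (mkB KL q))) t) = (p - q) * Lcoef b d (p + q) t.
Proof.
  unfold Lcoef; simpl; unfold coefV.
  rewrite Cpart_coef_app, coef_scale, Cpart_Cmul_real by reflexivity.
  simpl; rewrite Cpart_C0; ring.
Qed.

Lemma hom_derivation_witt Gam s pd d b p q t :
  hom_derivation Gam s pd d -> Gam p -> Gam q ->
  (p - q) * Lcoef b d (p + q) t = Lact p (Lcoef b d q) t - Lact q (Lcoef b d p) t.
Proof.
  intros [_ [_ Hder]] Hp Hq.
  specialize (Hder (mkB KL p) (mkB KL q) Hp Hq t).
  apply (f_equal (Cpart b)) in Hder.
  rewrite Cpart_ext_br_LL in Hder; rewrite Hder.
  unfold coefV at 1; rewrite Cpart_coef_app, !coef_scale; fold coefV.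
  replace (pd && par (mkB KL p))%bool with false by (destruct pd; reflexivity).
  rewrite !Cpart_Cmul_real by (simpl; ring).
  rewrite !Cpart_act_L; simpl; unfold Lcoef; ring.
Qed.

Lemma derivation_witt Gam s d b p q t :
  (forall x y, Gam x -> Gam y -> Gam (x + y)) ->
  derivation Gam s d -> Gam p -> Gam q ->
  (p - q) * Lcoef b d (p + q) t = Lact p (Lcoef b d q) t - Lact q (Lcoef b d p) t.
Proof.
  intros Gam_add [d0 [d1 [Hd0 [Hd1 Hsum]]]] Hp Hq.
  assert (Hsplit : forall r, Gam r -> forall t,
    Lcoef b d r t = Lcoef b d0 r t + Lcoef b d1 r t).
  { intros r Hr t'; unfold Lcoef; rewrite (Hsum (mkB KL r) Hr); apply Cpart_coef_app. }
  rewrite (Hsplit _ (Gam_add _ _ Hp Hq)), (Lact_ext_add p _ _ _ _ (Hsplit q Hq)),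
    (Lact_ext_add q _ _ _ _ (Hsplit p Hp)).
  pose proof (hom_derivation_witt Gam s false d0 b p q t Hd0 Hp Hq).
  pose proof (hom_derivation_witt Gam s true d1 b p q t Hd1 Hp Hq).
  lra.
Qed.

Definition finite_support {T : Type} (g : T -> R) : Prop :=
  exists l : list T, forall t, g t <> 0 -> In t l.

Lemma finite_support_Lcoef b d p : finite_support (Lcoef b d p).
Proof.
  exists (map snd (d (mkB KL p))); unfold Lcoef.
  induction (d (mkB KL p)) as [|[c x] v IH]; intro t; simpl.
  - rewrite Cpart_C0; tauto.
  - unfold coefV in *; simpl.
    destruct (BB_eq_dec x t); [left; assumption|].
    intro H; right; apply IH, H.
Qed.

Lemma finite_support_injective_absurd {T : Type} (g : T -> R) (f : nat -> T) :
  finite_support g -> (forall i j, f i = f j -> i = j) -> (forall n, g (f n) <> 0) -> False.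
Proof.
  intros [l Hl] Hinj Hf.
  assert (Hnodup : NoDup (map f (seq 0 (S (length l))))).
  { apply Injective_map_NoDup; [exact Hinj | apply seq_NoDup]. }
  assert (Hincl : incl (map f (seq 0 (S (length l)))) l).
  { intros x Hx; apply in_map_iff in Hx as [n [<- _]]; apply Hl, Hf. }
  pose proof (NoDup_incl_length Hnodup Hincl) as Hlen.
  rewrite length_map, length_seq in Hlen; lia.
Qed.

Definition tens (k1 k2 : kind) (x y : R) : B * B := (mkB k1 x, mkB k2 y).

Lemma tens_eq k1 k2 x y x' y' : x = x' -> y = y' -> tens k1 k2 x y = tens k1 k2 x' y'.
Proof. now intros -> ->. Qed.

Lemma antidiag_absurd (g : B * B -> R) k1 k2 x y c :
  c <> 0 -> finite_support g ->
  (forall n, g (tens k1 k2 (x + INR n * c) (y - INR n * c)) <> 0) -> False.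
Proof.
  intros Hc Hg; apply (finite_support_injective_absurd g _ Hg).
  intros i j E; injection E as E _.
  apply INR_eq, (Rmult_eq_reg_r c); [lra | exact Hc].
Qed.

Lemma Lact_tens p g k1 k2 x y x' y' :
  x' = x - p -> y' = y - p ->
  Lact p g (tens k1 k2 x y) =
  (beta k1 * p - x') * g (tens k1 k2 x' y) + (beta k2 * p - y') * g (tens k1 k2 x y').
Proof. now intros -> ->. Qed.

Lemma beta_ge_half k : / 2 <= beta k.
Proof. destruct k; simpl; lra. Qed.

Lemma beta_sum_mixed k1 k2 : beta k1 <> beta k2 -> beta k1 + beta k2 = 3 / 2.
Proof. destruct k1, k2; simpl; intro H; try (exfalso; apply H; reflexivity); lra. Qed.

Lemma INR_neq_5_half n : INR n <> 5 / 2.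
Proof.
  destruct (Compare_dec.le_lt_dec n 2) as [Hn|Hn]; apply le_INR in Hn;
    rewrite ?S_INR in Hn; simpl in Hn; lra.
Qed.

Section WittFamily.

Variables (Gam : R -> Prop) (eps : R) (cd : R -> B * B -> R).
Hypothesis Gam0 : Gam 0.
Hypothesis Gam_add : forall x y, Gam x -> Gam y -> Gam (x + y).
Hypothesis Gam_opp : forall x, Gam x -> Gam (- x).
Hypothesis Gam_eps : Gam eps.
Hypothesis eps_pos : 0 < eps.
Hypothesis cd_witt : forall p q t, Gam p -> Gam q ->
  (p - q) * cd (p + q) t = Lact p (cd q) t - Lact q (cd p) t.
Hypothesis cd_finite : forall p, finite_support (cd p).
Hypothesis cd_graded : forall p u w, Gam p -> cd p (u, w) <> 0 -> bx u + bx w = p.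
Hypothesis cd_eps : forall t, cd eps t = 0.

Lemma Gam_INR_eps n : Gam (INR n * eps).
Proof.
  induction n as [|n IH].
  - now rewrite Rmult_0_l.
  - rewrite S_INR, Rmult_plus_distr_r, Rmult_1_l; auto.
Qed.

Lemma Lact0_graded P t : Gam P -> Lact 0 (cd P) t = - P * cd P t.
Proof.
  intro HP; destruct t as [[k1 x] [k2 y]].
  rewrite (Lact_tens 0 _ k1 k2 x y x y) by ring.
  destruct (Req_dec (cd P (tens k1 k2 x y)) 0) as [Z|NZ].
  - unfold tens in *; rewrite Z; ring.
  - apply cd_graded in NZ; [simpl in NZ; unfold tens; rewrite <- NZ; ring | exact HP].
Qed.

Lemma Lact_cd0 P t : Gam P -> Lact P (cd 0) t = 0.
Proof.
  intro HP; pose proof (cd_witt 0 P t Gam0 HP) as E.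
  rewrite Rplus_0_l, Lact0_graded in E by exact HP; lra.
Qed.

(* [L_P] kills [d(L_0)] for every [P] in [Gam]; for large [P] its weight on the first factor is
   nonzero, so a nonzero coefficient of [d(L_0)] would reappear at infinitely many places. *)
Lemma cd0_eq0 t : cd 0 t = 0.
Proof.
  destruct t as [[k1 x] [k2 y]]; fold (tens k1 k2 x y).
  apply NNPP; intro NZ.
  destruct (INR_unbounded (2 * Rabs x / eps)) as [N HN].
  assert (HNeps : 2 * Rabs x < INR N * eps).
  { apply (Rmult_lt_compat_r eps) in HN; [|lra].
    unfold Rdiv in HN; rewrite Rmult_assoc, Rinv_l in HN; lra. }
  apply (antidiag_absurd (cd 0) k1 k2 (x + INR N * eps) (y - INR N * eps) eps);
    [lra | apply cd_finite |].
  intro n; set (p := INR (N + n) * eps).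
  assert (Hp : INR N * eps <= p).
  { apply Rmult_le_compat_r; [lra | apply le_INR; lia]. }
  pose proof (Lact_cd0 p (tens k1 k2 (x + p) y) (Gam_INR_eps (N + n))) as E.
  rewrite (Lact_tens p _ k1 k2 (x + p) y x (y - p)) in E by ring.
  rewrite (tens_eq k1 k2 _ _ (x + p) (y - p)) by (unfold p; rewrite plus_INR; ring).
  assert (Hw : 0 < beta k1 * p - x).
  { pose proof (beta_ge_half k1); pose proof (Rle_abs x); pose proof (Rabs_pos x).
    assert (0 <= (beta k1 - / 2) * p) by (apply Rmult_le_pos; lra).
    lra. }
  intro Z; rewrite Z, Rmult_0_r, Rplus_0_r in E.
  apply Rmult_integral in E as [E|E]; lra.
Qed.

Lemma Lact_eps_cd_meps t : Lact eps (cd (- eps)) t = 0.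
Proof.
  pose proof (cd_witt eps (- eps) t Gam_eps (Gam_opp _ Gam_eps)) as E.
  rewrite Rplus_opp_r, cd0_eq0, (Lact_ext_zero (- eps) (cd eps) t cd_eps) in E; lra.
Qed.

Lemma Lact_meps_cd_2eps t : Lact (- eps) (cd (2 * eps)) t = Lact (2 * eps) (cd (- eps)) t.
Proof.
  assert (G2 : Gam (2 * eps)) by (replace (2 * eps) with (eps + eps) by ring; auto).
  pose proof (cd_witt (- eps) (2 * eps) t (Gam_opp _ Gam_eps) G2) as E.
  replace (- eps + 2 * eps) with eps in E by ring.
  rewrite cd_eps in E; lra.
Qed.

Lemma cd_meps_step k1 k2 x y x' y' : x' = x + eps -> y' = y - eps ->
  (beta k1 * eps - x) * cd (- eps) (tens k1 k2 x y) +
  (beta k2 * eps - y') * cd (- eps) (tens k1 k2 x' y') = 0.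
Proof.
  intros -> ->.
  rewrite <- (Lact_eps_cd_meps (tens k1 k2 (x + eps) y)).
  rewrite (Lact_tens eps _ k1 k2 (x + eps) y x (y - eps)) by ring; reflexivity.
Qed.

Lemma cd_meps_reaches_top k1 k2 x y : cd (- eps) (tens k1 k2 x y) <> 0 ->
  exists n, x + INR n * eps = beta k1 * eps.
Proof.
  intro NZ; apply NNPP; intro Hnone.
  apply (antidiag_absurd (cd (- eps)) k1 k2 x y eps); [lra | apply cd_finite |].
  induction n as [|n IH].
  - rewrite (tens_eq k1 k2 _ _ x y) by (simpl; ring); exact NZ.
  - intro Z.
    pose proof (cd_meps_step k1 k2 (x + INR n * eps) (y - INR n * eps)
      (x + INR (S n) * eps) (y - INR (S n) * eps)
      ltac:(rewrite S_INR; ring) ltac:(rewrite S_INR; ring)) as E.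
    rewrite Z, Rmult_0_r, Rplus_0_r in E.
    apply Rmult_integral in E as [E|E]; [|contradiction].
    apply Hnone; exists n; lra.
Qed.

Lemma cd_meps_above k1 k2 x y : beta k1 * eps < x -> cd (- eps) (tens k1 k2 x y) = 0.
Proof.
  intro Hx; apply NNPP; intro NZ.
  destruct (cd_meps_reaches_top k1 k2 x y NZ) as [n Hn].
  pose proof (pos_INR n); nra.
Qed.

Lemma cd_meps_climb n k1 k2 x y : cd (- eps) (tens k1 k2 x y) <> 0 ->
  x + INR n * eps = beta k1 * eps ->
  cd (- eps) (tens k1 k2 (beta k1 * eps) (y - INR n * eps)) <> 0.
Proof.
  revert x y; induction n as [|n IH]; intros x y NZ Hn.
  - rewrite (tens_eq k1 k2 _ _ x y) by (simpl in *; lra); exact NZ.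
  - rewrite S_INR in Hn.
    pose proof (pos_INR n).
    rewrite (tens_eq k1 k2 _ _ (beta k1 * eps) (y - eps - INR n * eps)) by (rewrite ?S_INR; ring).
    apply (IH (x + eps)); [|lra].
    pose proof (cd_meps_step k1 k2 x y (x + eps) (y - eps) eq_refl eq_refl) as E.
    intro Z; rewrite Z, Rmult_0_r, Rplus_0_r in E.
    apply Rmult_integral in E as [E|E]; [nra | contradiction].
Qed.

Lemma cd_meps_top k1 k2 x y : cd (- eps) (tens k1 k2 x y) <> 0 ->
  cd (- eps) (tens k1 k2 (beta k1 * eps) (- eps - beta k1 * eps)) <> 0.
Proof.
  intro NZ; destruct (cd_meps_reaches_top k1 k2 x y NZ) as [n Hn].
  pose proof (cd_meps_climb n k1 k2 x y NZ Hn) as NZtop.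
  pose proof (cd_graded _ _ _ (Gam_opp _ Gam_eps) NZtop) as Hsum; simpl in Hsum.
  rewrite (tens_eq k1 k2 _ _ (beta k1 * eps) (y - INR n * eps)) by lra; exact NZtop.
Qed.

(* Different kinds: the weight [beta k2 * eps - y] on the second factor never vanishes along
   the downward antidiagonal from the top, so the top coefficient spreads downward forever. *)
Lemma cd_meps_top_mixed k1 k2 : beta k1 <> beta k2 ->
  cd (- eps) (tens k1 k2 (beta k1 * eps) (- eps - beta k1 * eps)) = 0.
Proof.
  intro Hb; pose proof (beta_sum_mixed k1 k2 Hb) as Hsum.
  apply NNPP; intro NZ.
  apply (antidiag_absurd (cd (- eps)) k1 k2 (beta k1 * eps) (- eps - beta k1 * eps) (- eps));
    [lra | apply cd_finite |].
  induction n as [|n IH].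
  - rewrite (tens_eq k1 k2 _ _ (beta k1 * eps) (- eps - beta k1 * eps)) by (simpl; ring).
    exact NZ.
  - intro Z.
    pose proof (cd_meps_step k1 k2
      (beta k1 * eps + INR (S n) * - eps) (- eps - beta k1 * eps - INR (S n) * - eps)
      (beta k1 * eps + INR n * - eps) (- eps - beta k1 * eps - INR n * - eps)
      ltac:(rewrite S_INR; ring) ltac:(rewrite S_INR; ring)) as E.
    rewrite Z, Rmult_0_r, Rplus_0_l in E.
    apply Rmult_integral in E as [E|E]; [|contradiction].
    replace (beta k2) with (3 / 2 - beta k1) in E by lra.
    apply (INR_neq_5_half n), (Rmult_eq_reg_r eps); lra.
Qed.

Lemma cd_2eps_relation k1 k2 x y x' y' x'' y'' :
  x' = x + eps -> y' = y + eps -> x'' = x - 2 * eps -> y'' = y - 2 * eps ->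
  (beta k1 * - eps - x') * cd (2 * eps) (tens k1 k2 x' y) +
  (beta k2 * - eps - y') * cd (2 * eps) (tens k1 k2 x y') =
  (beta k1 * (2 * eps) - x'') * cd (- eps) (tens k1 k2 x'' y) +
  (beta k2 * (2 * eps) - y'') * cd (- eps) (tens k1 k2 x y'').
Proof.
  intros Hx' Hy' Hx'' Hy''.
  rewrite <- (Lact_tens (- eps)), <- (Lact_tens (2 * eps)) by lra.
  apply Lact_meps_cd_2eps.
Qed.

(* Same kinds: the weight on the second factor vanishes at the top, so we pass to [d(L_(2 eps))],
   which the relation for [(-eps, 2 eps)] ties to [d(L_(-eps))] above the top. *)
Lemma cd_meps_top_same k1 k2 : beta k1 = beta k2 ->
  cd (- eps) (tens k1 k2 (beta k1 * eps) (- eps - beta k1 * eps)) = 0.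
Proof.
  intro Hb; set (xT := beta k1 * eps); set (yT := - eps - beta k1 * eps).
  pose proof (beta_ge_half k1).
  assert (Z3 : cd (2 * eps) (tens k1 k2 (xT + 3 * eps) yT) = 0).
  { apply NNPP; intro NZ.
    apply (antidiag_absurd (cd (2 * eps)) k1 k2 (xT + 3 * eps) yT eps);
      [lra | apply cd_finite |].
    induction n as [|n IH].
    - rewrite (tens_eq k1 k2 _ _ (xT + 3 * eps) yT) by (simpl; ring); exact NZ.
    - intro Z.
      pose proof (Rmult_le_pos _ _ (pos_INR n) (Rlt_le _ _ eps_pos)).
      pose proof (cd_2eps_relation k1 k2 (xT + 3 * eps + INR n * eps) (yT - INR (S n) * eps)
        (xT + 3 * eps + INR (S n) * eps) (yT - INR n * eps)
        (xT + eps + INR n * eps) (yT - INR (S n) * eps - 2 * eps)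
        ltac:(rewrite S_INR; ring) ltac:(rewrite S_INR; ring) ltac:(ring) eq_refl) as E.
      rewrite Z, !cd_meps_above in E by (unfold xT; rewrite ?S_INR; lra).
      assert (Hw : beta k2 * - eps - (yT - INR n * eps) = (1 + INR n) * eps)
        by (unfold yT; rewrite <- Hb; ring).
      rewrite Hw, Rmult_0_r, Rplus_0_l, !Rmult_0_r, Rplus_0_l in E.
      apply Rmult_integral in E as [E|E]; [nra | contradiction]. }
  pose proof (cd_2eps_relation k1 k2 (xT + 2 * eps) yT (xT + 3 * eps) (yT + eps)
    xT (yT - 2 * eps) ltac:(ring) eq_refl ltac:(ring) eq_refl) as E.
  rewrite Z3, (cd_meps_above k1 k2 (xT + 2 * eps)) in E by (unfold xT; lra).
  replace (beta k2 * - eps - (yT + eps)) with 0 in E by (unfold yT; rewrite <- Hb; ring).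
  unfold xT in E |- *.
  apply NNPP; intro NZ.
  assert (Hw : beta k1 * (2 * eps) - beta k1 * eps <> 0) by nra.
  apply Hw, (Rmult_eq_reg_r (cd (- eps) (tens k1 k2 (beta k1 * eps) yT))); [lra | exact NZ].
Qed.

Lemma cd_meps_eq0 t : cd (- eps) t = 0.
Proof.
  destruct t as [[k1 x] [k2 y]]; fold (tens k1 k2 x y).
  apply NNPP; intro NZ; apply (cd_meps_top k1 k2 x y NZ).
  destruct (Req_dec (beta k1) (beta k2)) as [Hb|Hb].
  - exact (cd_meps_top_same k1 k2 Hb).
  - exact (cd_meps_top_mixed k1 k2 Hb).
Qed.

End WittFamily.

Theorem mainTheorem9 (Gam : R -> Prop) (s eps : R) (d : B -> VecV) :
  nontriv_add_subgroup Gam -> Gam (2 * s) ->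
  Gam eps -> 0 < eps ->
  Der0 Gam s d ->
  (forall t, coefV (d (mkB KL eps)) t = C0) ->
  forall t, coefV (d (mkB KL (- eps))) t = C0.
Proof.
  intros [Gam0 [Gam_add [Gam_opp _]]] _ Gam_eps eps_pos [Hder Hgraded] Hd t.
  apply Cparts_eq0; intro b.
  apply (cd_meps_eq0 Gam eps (Lcoef b d) Gam0 Gam_add Gam_opp Gam_eps eps_pos).
  - intros p q t' Hp Hq; exact (derivation_witt Gam s d b p q t' Gam_add Hder Hp Hq).
  - apply finite_support_Lcoef.
  - intros p u w Hp NZ; apply (Hgraded (mkB KL p) Hp u w).
    intro E; apply NZ; unfold Lcoef; rewrite E; apply Cpart_C0.
  - intro t'; unfold Lcoef; rewrite Hd; apply Cpart_C0.
Qed.
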